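(* There exists a regular monoid $M$ such that all its Schützenberger groups (equivalently, all its maximal subgroups) are residually finite, and its right action on its $\mathcal{L}$-classes and its left action on its $\mathcal{R}$-classes are residually finite, but $M$ itself is not residually finite.
   Context: A monoid $M$ is regular if for every $x$ there is $y$ with $xyx=x$. Residual finiteness of a monoid: distinct elements are separated by homomorphisms to finite monoids. Green's relations: $x\mathcal{R}y$ iff $xM=yM$, $x\mathcal{L}y$ iff $Mx=My$, $\mathcal{H}=\mathcal{R}\cap\mathcal{L}$. $M$ acts on the right on $M/\mathcal{L}$ by $L_x\cdot m=L_{xm}$ and on the left on $M/\mathcal{R}$ by $m\cdot R_x=R_{mx}$; an action is residually finite if any two distinct points are separated by an action homomorphism onto an action on a finite set. For an $\mathcal{H}$-class $H$, $\mathrm{Stab}(H)=\{s\in M:Hs=H\}$, $\sigma=\{(x,y):hx=hy\ \forall h\in H\}$, and the Schützenberger group is $\Gamma(H)=\mathrm{Stab}(H)/\sigma$. *)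

From Stdlib Require Import List.

Record monoid := Monoid {
  carrier :> Type;
  mop : carrier -> carrier -> carrier;
  mone : carrier;
  massoc : forall x y z, mop x (mop y z) = mop (mop x y) z;
  mone_l : forall x, mop mone x = x;
  mone_r : forall x, mop x mone = x
}.

Arguments mop {m} _ _.
Arguments mone {m}.

Definition finite_type (X : Type) : Prop := exists l : list X, forall x, In x l.

Definition is_group (G : monoid) : Prop :=
  forall x : G, exists y : G, mop x y = mone /\ mop y x = mone.

Definition is_monoid_hom (M N : monoid) (f : M -> N) : Prop :=
  f mone = mone /\ forall x y : M, f (mop x y) = mop (f x) (f y).

Definition regular (M : monoid) : Prop :=
  forall x : M, exists y : M, mop (mop x y) x = x.

Definition residually_finite (M : monoid) : Prop :=
  forall x y : M, x <> y ->
    exists (N : monoid), finite_type N /\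
      exists f : M -> N, is_monoid_hom M N f /\ f x <> f y.

Definition greenR (M : monoid) (x y : M) : Prop :=
  (exists a : M, x = mop y a) /\ (exists b : M, y = mop x b).
Definition greenL (M : monoid) (x y : M) : Prop :=
  (exists a : M, x = mop a y) /\ (exists b : M, y = mop b x).
Definition greenH (M : monoid) (x y : M) : Prop := greenR M x y /\ greenL M x y.

Definition is_right_action (M : monoid) (X : Type) (act : X -> M -> X) : Prop :=
  (forall p, act p mone = p) /\ (forall p (a b : M), act (act p a) b = act p (mop a b)).
Definition is_left_action (M : monoid) (X : Type) (act : M -> X -> X) : Prop :=
  (forall p, act mone p = p) /\ (forall (a b : M) p, act a (act b p) = act (mop a b) p).

(* A map on M/L is
   represented as a map on M constant on L-classes. *)
Definition L_action_residually_finite (M : monoid) : Prop :=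
  forall x y : M, ~ greenL M x y ->
    exists (X : Type) (act : X -> M -> X),
      finite_type X /\ is_right_action M X act /\
      exists phi : M -> X,
        (forall u v : M, greenL M u v -> phi u = phi v) /\
        (forall (u m : M), phi (mop u m) = act (phi u) m) /\
        phi x <> phi y.

Definition R_action_residually_finite (M : monoid) : Prop :=
  forall x y : M, ~ greenR M x y ->
    exists (X : Type) (act : M -> X -> X),
      finite_type X /\ is_left_action M X act /\
      exists phi : M -> X,
        (forall u v : M, greenR M u v -> phi u = phi v) /\
        (forall (m u : M), phi (mop m u) = act m (phi u)) /\
        phi x <> phi y.

Definition in_stab (M : monoid) (h0 s : M) : Prop :=
  (forall h : M, greenH M h0 h -> greenH M h0 (mop h s)) /\
  (forall h' : M, greenH M h0 h' -> exists h : M, greenH M h0 h /\ h' = mop h s).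

Definition schutz_sigma (M : monoid) (h0 x y : M) : Prop :=
  forall h : M, greenH M h0 h -> mop h x = mop h y.

(* A homomorphism Gamma(H) -> G is represented as a map on Stab(H)
   (extended arbitrarily to M) that is constant on sigma-classes and
   multiplicative with f 1 = 1. *)
Definition schutzenberger_group_residually_finite (M : monoid) (h0 : M) : Prop :=
  forall s t : M, in_stab M h0 s -> in_stab M h0 t -> ~ schutz_sigma M h0 s t ->
    exists (G : monoid), is_group G /\ finite_type G /\
      exists f : M -> G,
        (forall u v : M, in_stab M h0 u -> in_stab M h0 v ->
            schutz_sigma M h0 u v -> f u = f v) /\
        (forall u v : M, in_stab M h0 u -> in_stab M h0 v ->
            f (mop u v) = mop (f u) (f v)) /\
        f mone = mone /\
        f s <> f t.

(* Adjoin an identity to the Rees matrix semigroup over Z/2 with row and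
   column indices in nat and sandwich matrix P(l, i) = [l = i].  Its H-classes
   are copies of Z/2 or trivial, and every element acts on the L-classes (resp.
   R-classes) either trivially or as a constant map, so one point can be
   separated from all others by a two-point quotient.  But any homomorphism to
   a finite monoid identifies two columns a <> b, hence identifies
   (0,0,a)(a,0,0) = (0,1,0) with (0,0,b)(a,0,0) = (0,0,0). *)
From Stdlib Require Import List Arith Lia Bool Classical FinFun.
Import ListNotations.

Section MonoidFacts.
Variable M : monoid.

Lemma greenR_refl (x : M) : greenR M x x.
Proof. split; exists mone; symmetry; apply mone_r. Qed.

Lemma greenL_refl (x : M) : greenL M x x.
Proof. split; exists mone; symmetry; apply mone_l. Qed.

Lemma greenH_refl (x : M) : greenH M x x.
Proof. split; [apply greenR_refl | apply greenL_refl]. Qed.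

Lemma schutzenberger_group_residually_finite_of_rep (h0 : M) (G : monoid) (f : M -> G) :
  is_group G -> finite_type G -> f mone = mone ->
  (forall u v, in_stab M h0 u -> in_stab M h0 v -> f (mop u v) = mop (f u) (f v)) ->
  (forall u v, in_stab M h0 u -> in_stab M h0 v ->
     schutz_sigma M h0 u v <-> f u = f v) ->
  schutzenberger_group_residually_finite M h0.
Proof.
  intros HG Gfin f1 fmul fsigma s t Hs Ht Hst.
  exists G; split; [exact HG | split; [exact Gfin |]].
  exists f; repeat split; auto.
  - intros u v Hu Hv; apply fsigma; assumption.
  - intro E; apply Hst, fsigma; assumption.
Qed.

End MonoidFacts.

Lemma pigeonhole_nat (X : Type) : finite_type X ->
  forall F : nat -> X, exists a b, a <> b /\ F a = F b.
Proof.
  intros [l Hl] F; apply NNPP; intro Hno.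
  assert (Finj : Injective F).
  { intros a b E; apply NNPP; intro Hab; apply Hno; eauto. }
  pose proof (Injective_map_NoDup Finj (seq_NoDup (S (length l)) 0)) as Hnodup.
  assert (Hincl : incl (map F (seq 0 (S (length l)))) l) by (intros z _; apply Hl).
  pose proof (NoDup_incl_length Hnodup Hincl) as Hlen.
  rewrite length_map, length_seq in Hlen; lia.
Qed.

Lemma not_residually_finite_of_sandwich (M : monoid) (c d : M) (x y : nat -> M) :
  c <> d ->
  (forall a, mop (x a) (y a) = c) ->
  (forall a b, a <> b -> mop (x b) (y a) = d) ->
  ~ residually_finite M.
Proof.
  intros Hcd Hdiag Hoff HRF.
  destruct (HRF c d Hcd) as [N [Nfin [f [[_ fmul] Hfcd]]]].
  destruct (pigeonhole_nat N Nfin (fun k => f (x k))) as [a [b [Hab E]]].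
  apply Hfcd.
  rewrite <- (Hdiag a), <- (Hoff a b Hab), !fmul, E; reflexivity.
Qed.

Definition option_eq_dec {A : Type} (dec : forall a b : A, {a = b} + {a <> b}) :
  forall x y : option A, {x = y} + {x <> y}.
Proof. decide equality. Defined.

Definition Z2 : monoid :=
  Monoid bool xorb false (fun x y z => eq_sym (xorb_assoc x y z)) xorb_false_l xorb_false_r.

Lemma Z2_group : is_group Z2.
Proof. intro x; exists x; split; apply xorb_nilpotent. Qed.

Lemma Z2_finite : finite_type Z2.
Proof. exists [true; false]; intros []; simpl; auto. Qed.

Section ReesMonoid.
Variables (I Λ : Type) (P : Λ -> I -> bool).

Inductive rees := rees_one | rees_el (i : I) (g : bool) (l : Λ).

Definition rees_mul (x y : rees) : rees :=
  match x, y with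
  | rees_one, _ => y
  | _, rees_one => x
  | rees_el i g l, rees_el j h m => rees_el i (xorb g (xorb (P l j) h)) m
  end.

Lemma rees_mulA (x y z : rees) : rees_mul x (rees_mul y z) = rees_mul (rees_mul x y) z.
Proof.
  destruct x as [|i g l], y as [|j h m], z as [|k c n]; simpl; try reflexivity.
  f_equal; destruct g, h, c, (P l j), (P m k); reflexivity.
Qed.

Lemma rees_mul1 (x : rees) : rees_mul x rees_one = x.
Proof. destruct x; reflexivity. Qed.

Definition rees_monoid : monoid :=
  Monoid rees rees_mul rees_one rees_mulA (fun _ => eq_refl) rees_mul1.

Lemma rees_regular : regular rees_monoid.
Proof.
  intros [|i g l]; [exists rees_one; reflexivity |].
  exists (rees_el i g l); simpl.
  f_equal; destruct g, (P l i); reflexivity.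
Qed.

Lemma rees_mul_eq1 (x y : rees) : rees_mul x y = rees_one -> x = rees_one /\ y = rees_one.
Proof. destruct x, y; simpl; easy. Qed.

Definition rees_row (x : rees) : option I :=
  match x with rees_one => None | rees_el i _ _ => Some i end.

Definition rees_col (x : rees) : option Λ :=
  match x with rees_one => None | rees_el _ _ l => Some l end.

Lemma greenR_rees (x y : rees_monoid) : greenR rees_monoid x y <-> rees_row x = rees_row y.
Proof.
  split.
  - intros [[a Ha] [b Hb]]; simpl in *.
    destruct x as [|i g l], y as [|j h m]; try reflexivity.
    + now destruct (rees_mul_eq1 _ _ (eq_sym Ha)).
    + now destruct (rees_mul_eq1 _ _ (eq_sym Hb)).
    + destruct a; inversion Ha; reflexivity.
  - destruct x as [|i g l], y as [|j h m]; simpl; try discriminate.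
    + intros _; apply greenR_refl.
    + intros [= <-]; split.
      * exists (rees_el i (xorb h (xorb (P m i) g)) l); simpl.
        f_equal; destruct g, h, (P m i); reflexivity.
      * exists (rees_el i (xorb g (xorb (P l i) h)) m); simpl.
        f_equal; destruct g, h, (P l i); reflexivity.
Qed.

Lemma greenL_rees (x y : rees_monoid) : greenL rees_monoid x y <-> rees_col x = rees_col y.
Proof.
  split.
  - intros [[a Ha] [b Hb]]; simpl in *.
    destruct x as [|i g l], y as [|j h m]; try reflexivity.
    + now destruct (rees_mul_eq1 _ _ (eq_sym Ha)).
    + now destruct (rees_mul_eq1 _ _ (eq_sym Hb)).
    + destruct a; inversion Ha; reflexivity.
  - destruct x as [|i g l], y as [|j h m]; simpl; try discriminate.
    + intros _; apply greenL_refl.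
    + intros [= <-]; split.
      * exists (rees_el i (xorb g (xorb (P l j) h)) l); simpl.
        f_equal; destruct g, h, (P l j); reflexivity.
      * exists (rees_el j (xorb h (xorb (P l i) g)) l); simpl.
        f_equal; destruct g, h, (P l i); reflexivity.
Qed.

Lemma greenH_rees_el (i : I) (g : bool) (l : Λ) (h : rees_monoid) :
  greenH rees_monoid (rees_el i g l) h -> exists g', h = rees_el i g' l.
Proof.
  intros [HR HL]; apply greenR_rees in HR; apply greenL_rees in HL.
  destruct h as [|j g' m]; simpl in *; try discriminate.
  injection HR as <-; injection HL as <-; eauto.
Qed.

Lemma rees_stab_one (s : rees_monoid) : in_stab rees_monoid rees_one s -> s = rees_one.
Proof.
  intros [Hstab _].
  destruct (Hstab _ (greenH_refl _ _)) as [HR _].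
  apply greenR_rees in HR; destruct s; easy.
Qed.

Lemma rees_stab_el (i : I) (g : bool) (l : Λ) (s : rees_monoid) :
  in_stab rees_monoid (rees_el i g l) s -> s = rees_one \/ exists j h, s = rees_el j h l.
Proof.
  intros [Hstab _].
  destruct (Hstab _ (greenH_refl _ _)) as [_ HL].
  apply greenL_rees in HL; destruct s as [|j h m]; [now left | right].
  injection HL as <-; eauto.
Qed.

(* The element of Z/2 by which s translates an H-class it stabilises; it is
   only meaningful when the column of that H-class is the column of s. *)
Definition rees_shift (s : rees) : bool :=
  match s with rees_one => false | rees_el j h m => xorb (P m j) h end.

Lemma rees_mul_stab (i : I) (g : bool) (l : Λ) (s : rees) :
  (s = rees_one \/ exists j h, s = rees_el j h l) ->
  rees_mul (rees_el i g l) s = rees_el i (xorb g (rees_shift s)) l.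
Proof. intros [-> | [j [h ->]]]; simpl; [rewrite xorb_false_r |]; reflexivity. Qed.

Lemma rees_schutzenberger_residually_finite (h0 : rees_monoid) :
  schutzenberger_group_residually_finite rees_monoid h0.
Proof.
  apply (schutzenberger_group_residually_finite_of_rep rees_monoid h0 Z2 rees_shift);
    [exact Z2_group | exact Z2_finite | reflexivity | |].
  - destruct h0 as [|i g l]; intros u v Hu Hv.
    + now rewrite (rees_stab_one _ Hu), (rees_stab_one _ Hv).
    + destruct (rees_stab_el _ _ _ _ Hu) as [-> | [j [h ->]]]; [reflexivity |].
      destruct (rees_stab_el _ _ _ _ Hv) as [-> | [k [c ->]]]; simpl;
        [now rewrite xorb_false_r |].
      destruct (P l j), h, (P l k), c; reflexivity.
  - destruct h0 as [|i g l]; intros u v Hu Hv.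
    + rewrite (rees_stab_one _ Hu), (rees_stab_one _ Hv).
      split; [reflexivity | intros _ h _; reflexivity].
    + pose proof (rees_mul_stab i g l u (rees_stab_el _ _ _ _ Hu)) as Eu.
      pose proof (rees_mul_stab i g l v (rees_stab_el _ _ _ _ Hv)) as Ev.
      split.
      * intro Hsigma; specialize (Hsigma _ (greenH_refl _ _)).
        change (rees_mul (rees_el i g l) u = rees_mul (rees_el i g l) v) in Hsigma.
        rewrite Eu, Ev in Hsigma; injection Hsigma.
        destruct g, (rees_shift u), (rees_shift v); easy.
      * intros E h Hh; destruct (greenH_rees_el _ _ _ _ Hh) as [g' ->].
        change (rees_mul (rees_el i g' l) u = rees_mul (rees_el i g' l) v).
        rewrite (rees_mul_stab i g' l u (rees_stab_el _ _ _ _ Hu)),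
                (rees_mul_stab i g' l v (rees_stab_el _ _ _ _ Hv)), E.
        reflexivity.
Qed.

(* Each element acts on M/L (resp. M/R) as the identity (the adjoined
   identity) or as a constant map, so the indicator of the class of x is an
   action homomorphism onto an action on bool. *)
Lemma rees_L_action_residually_finite :
  (forall l m : Λ, {l = m} + {l <> m}) -> L_action_residually_finite rees_monoid.
Proof.
  intros Λdec x y Hxy.
  pose (is_col_x o := if option_eq_dec Λdec o (rees_col x) then true else false).
  exists bool, (fun b (m : rees_monoid) =>
    match m with rees_one => b | rees_el _ _ l => is_col_x (Some l) end).
  split; [exists [true; false]; intros []; simpl; auto |].
  split; [split; [reflexivity | intros b [|] [|]; reflexivity] |].
  exists (fun u => is_col_x (rees_col u)); repeat split.
  - intros u v Huv; apply greenL_rees in Huv; now rewrite Huv.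
  - intros u [|]; simpl; [now rewrite rees_mul1 | destruct u; reflexivity].
  - unfold is_col_x.
    destruct (option_eq_dec Λdec (rees_col x) (rees_col x)) as [_ | []]; [| reflexivity].
    destruct (option_eq_dec Λdec (rees_col y) (rees_col x)) as [E |]; [| discriminate].
    exfalso; apply Hxy, greenL_rees; now symmetry.
Qed.

Lemma rees_R_action_residually_finite :
  (forall i j : I, {i = j} + {i <> j}) -> R_action_residually_finite rees_monoid.
Proof.
  intros Idec x y Hxy.
  pose (is_row_x o := if option_eq_dec Idec o (rees_row x) then true else false).
  exists bool, (fun (m : rees_monoid) b =>
    match m with rees_one => b | rees_el i _ _ => is_row_x (Some i) end).
  split; [exists [true; false]; intros []; simpl; auto |].
  split; [split; [reflexivity | intros [|] [|] b; reflexivity] |].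
  exists (fun u => is_row_x (rees_row u)); repeat split.
  - intros u v Huv; apply greenR_rees in Huv; now rewrite Huv.
  - intros [|] u; simpl; [reflexivity | destruct u; reflexivity].
  - unfold is_row_x.
    destruct (option_eq_dec Idec (rees_row x) (rees_row x)) as [_ | []]; [| reflexivity].
    destruct (option_eq_dec Idec (rees_row y) (rees_row x)) as [E |]; [| discriminate].
    exfalso; apply Hxy, greenR_rees; now symmetry.
Qed.

End ReesMonoid.

Arguments rees_el {I Λ} i g l.

Definition diagonal_rees_monoid : monoid := rees_monoid nat nat Nat.eqb.

Lemma diagonal_rees_not_residually_finite : ~ residually_finite diagonal_rees_monoid.
Proof.
  apply (not_residually_finite_of_sandwich diagonal_rees_monoid
           (rees_el 0 true 0) (rees_el 0 false 0) (fun a => rees_el 0 false a) (fun a => rees_el a false 0)); [discriminate | |].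
  - intro a; simpl; now rewrite Nat.eqb_refl.
  - intros a b Hab; simpl; apply Nat.eqb_neq in Hab; now rewrite Nat.eqb_sym, Hab.
Qed.

Theorem mainTheorem7 :
  exists M : monoid,
    regular M /\
    (forall h0 : M, schutzenberger_group_residually_finite M h0) /\
    L_action_residually_finite M /\
    R_action_residually_finite M /\
    ~ residually_finite M.
Proof.
  exists diagonal_rees_monoid; repeat split.
  - apply rees_regular.
  - apply rees_schutzenberger_residually_finite.
  - apply rees_L_action_residually_finite, Nat.eq_dec.
  - apply rees_R_action_residually_finite, Nat.eq_dec.
  - apply diagonal_rees_not_residually_finite.
Qed.
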